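(* Let $\lambda$ be a partition of $n$, let $l_1(\lambda)$ be the multiplicity of the part $1$ in $\lambda$, and let $\mathrm{fch}(\lambda)=\{h(1,1),h(2,1),\dots,h(l(\lambda),1)\}$ be the set of first-column hook lengths of $\lambda$, where $l(\lambda)$ is the number of parts. Let $f_\lambda$ be the degree of the irreducible character of $\mathsf{S}_n$ labelled by $\lambda$. If $q$ is a prime with $n-l_1(\lambda)\le q\le n$ and $q\nmid f_\lambda$, then $q,2q,\dots,\lfloor n/q\rfloor q\in\mathrm{fch}(\lambda)$.
   Context: $h(i,j)$ denotes the hook length at node $(i,j)$ of the Young diagram of $\lambda$ (number of nodes to the right of and below $(i,j)$, including $(i,j)$). $f_\lambda=n!/\prod_{(i,j)}h(i,j)$. *)

From mathcomp Require Import all_boot.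
Set Implicit Arguments. Unset Strict Implicit. Unset Printing Implicit Defensive.

(* A partition of n: a nonincreasing sequence of positive parts summing to n.
   Rows and columns are 0-indexed: row i (i < size la) has nth 0 la i nodes. *)
Definition is_partition (n : nat) (la : seq nat) : Prop :=
  [/\ sorted geq la, all (fun p => 0 < p) la & sumn la = n].

Definition col_len (la : seq nat) (j : nat) : nat := count (fun p => j < p) la.

(* hook length at node (i,j) (0-indexed): arm + leg + 1 *)
Definition hook (la : seq nat) (i j : nat) : nat :=
  (nth 0 la i - j.+1) + (col_len la j - i.+1) + 1.

(* f_lambda = n! / prod of hook lengths (hook length formula) *)
Definition flam (la : seq nat) : nat :=
  (sumn la)`! %/ \prod_(i < size la) \prod_(j < nth 0 la i) hook la i j.

Definition l1 (la : seq nat) : nat := count_mem 1 la.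

Definition fch (la : seq nat) : seq nat := [seq hook la i 0 | i <- iota 0 (size la)].

From mathcomp Require Import all_boot zify.
Set Implicit Arguments. Unset Strict Implicit. Unset Printing Implicit Defensive.

(* By the hook length formula f_la = n! / H, where H is the
   product of the hook lengths.  As [flam] divides with truncation, we first
   show that H divides n!: for every m at most n/m hooks are divisible by m, as
   one reads off the m-abacus of the beta-numbers of la (which are its
   first-column hook lengths), and Legendre's formula turns this into an
   inequality of p-adic valuations for every prime p.  A hook outside the first
   column is smaller than n - l_1(la) <= q, hence v_q(H) is the sum of v_q(h)
   over the first-column hooks h.  These are distinct numbers in [1, n],
   whereas v_q(n!) is the sum of v_q(t) over all t in [1, n]; so if some
   multiple kq <= n were not a first-column hook, then v_q(H) < v_q(n!) and q
   would divide f_la. *)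

Lemma big_iota0 (R : Type) (idx : R) (op : R -> R -> R) k (F : nat -> R) :
  \big[op/idx]_(i <- iota 0 k) F i = \big[op/idx]_(i < k) F i.
Proof. by rewrite -(big_mkord xpredT) /index_iota subn0. Qed.

Lemma sum_ord_count (P : pred nat) k : \sum_(j < k) (P j : nat) = count P (iota 0 k).
Proof. by rewrite -sumn_count sumnE big_map big_iota0. Qed.

Lemma dvdn_logn d m : 0 < d -> 0 < m ->
  (forall p, prime p -> logn p d <= logn p m) -> d %| m.
Proof.
move=> d_gt0 m_gt0 le_logn; apply/(dvdn_partP _ d_gt0) => p.
by rewrite mem_primes => /andP[p_pr _]; rewrite p_part pfactor_dvdn // le_logn.
Qed.

Lemma logn_prod p (I : Type) (r : seq I) (F : I -> nat) :
  (forall i, 0 < F i) -> logn p (\prod_(i <- r) F i) = \sum_(i <- r) logn p (F i).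
Proof.
move=> F_gt0; elim: r => [|i r IHr]; first by rewrite !big_nil logn1.
by rewrite !big_cons lognM ?IHr // prodn_gt0.
Qed.

Lemma logn_count_dvd_widen p h M : prime p -> 0 < h -> h <= M ->
  logn p h = \sum_(1 <= k < M) (p ^ k %| h).
Proof.
move=> p_pr h_gt0 h_le; rewrite logn_count_dvd // (big_cat_nat h_gt0 h_le) /=.
rewrite [X in _ + X]big1_seq ?addn0 // => k /andP[_].
rewrite mem_index_iota => /andP[h_le_k _]; apply/eqP; rewrite eqb0.
apply/negP => /(dvdn_leq h_gt0).
by rewrite leqNgt (leq_ltn_trans h_le_k (ltn_expl k (prime_gt1 p_pr))).
Qed.

Lemma logn_fact_iota p n : logn p n`! = \sum_(t <- iota 1 n) logn p t.
Proof.
elim: n => [|n IHn]; first by rewrite big_nil logn1.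
rewrite factS lognM ?fact_gt0 // IHn -addn1 iotaD big_cat big_seq1 add1n.
by rewrite addn1 addnC.
Qed.

Lemma sum_logn_ltn_logn_fact p n (s : seq nat) y :
  prime p -> uniq s -> {subset s <= iota 1 n} ->
  y \in iota 1 n -> y \notin s -> p %| y ->
  \sum_(b <- s) logn p b < logn p n`!.
Proof.
move=> p_pr s_uniq s_sub y_in y_notin p_dvd_y.
have y_gt0 : 0 < y by move: y_in; rewrite mem_iota => /andP[].
have logn_y_gt0 : 0 < logn p y by rewrite logn_gt0 mem_primes p_pr y_gt0.
have ys_sub : {subset y :: s <= iota 1 n}.
  by move=> t; rewrite inE => /predU1P[-> // | /s_sub].
have := @uniq_sub_le_big _ addn leq leqnn (fun x y => leq_addr y x) 0 _
          (y :: s) (iota 1 n) xpredT (logn p).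
rewrite /= y_notin s_uniq iota_uniq => /(_ isT isT ys_sub).
rewrite logn_fact_iota big_cons; apply: leq_trans.
by rewrite -[X in X < _]add0n ltn_add2r.
Qed.

Lemma count_predIC (T : Type) (a P : pred T) (s : seq T) :
  count (fun t => a t && P t) s + count (fun t => ~~ a t && P t) s = count P s.
Proof. by elim: s => //= t s <-; case: (a t); case: (P t) => /=; lia. Qed.

Lemma ltn_count (T : eqType) (a b : pred T) (s : seq T) y :
  (forall x, a x -> b x) -> y \in s -> b y -> ~~ a y -> count a s < count b s.
Proof.
move=> sub_ab y_in b_y not_a_y; rewrite -(count_predIC a b s).
rewrite (@eq_count _ _ a) => [|x /=]; last exact/andb_idr/sub_ab.
rewrite -[X in X < _]addn0 ltn_add2l -has_count.
by apply/hasP; exists y; rewrite ?not_a_y.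
Qed.

Lemma count_iota_mem (s : seq nat) (P : pred nat) x : uniq s ->
  count (fun t => (t \in s) && P t) (iota 0 x) = count (fun b => (b < x) && P b) s.
Proof.
move=> s_uniq.
have -> : count (fun t => (t \in s) && P t) (iota 0 x)
          = count P [seq t <- iota 0 x | t \in s].
  by rewrite count_filter; apply: eq_count => t; rewrite /= andbC.
have -> : count (fun b => (b < x) && P b) s = count P [seq b <- s | b < x].
  by rewrite count_filter; apply: eq_count => t; rewrite /= andbC.
apply/permP/uniq_perm; rewrite ?filter_uniq ?iota_uniq // => t.
by rewrite !mem_filter mem_iota andbC.
Qed.

Lemma count_iota_modn m x : 0 < m ->
  count (fun t => t %% m == x %% m) (iota 0 x) = x %/ m.
Proof.
move=> m_gt0; elim/ltn_ind: x => x IHx.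
have [x_lt | x_ge] := ltnP x m.
  rewrite divn_small // (eq_in_count (a2 := pred0)) ?count_pred0 // => t.
  by rewrite mem_iota /= => t_lt; rewrite !modn_small ?ltn_eqF // (ltn_trans t_lt).
have [y y_lt ->] : exists2 y, y < x & x = y + m by exists (x - m); lia.
rewrite modnDr divnDr ?dvdnn // divnn m_gt0 addn1 iotaD count_cat add0n IHx //.
rewrite -addn1; congr (_ + _).
rewrite -[y]addn0 iotaDl count_map addn0 (eq_in_count (a2 := pred1 0)) => [|u].
  by rewrite count_uniq_mem ?iota_uniq // mem_iota m_gt0.
by rewrite mem_iota /= => u_lt; rewrite -{2}[y]addn0 eqn_modDl mod0n modn_small.
Qed.

Lemma sum_ord_leq_sum_uniq (w : seq nat) :
  uniq w -> \sum_(i < size w) i <= \sum_(x <- w) x.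
Proof.
move eq_k : (size w) => k; elim: k w eq_k => [|k IHk] w size_w w_uniq.
  by rewrite big_ord0.
have [x x_in k_le_x] : exists2 x, x \in w & k <= x.
  apply/hasP; apply: contraT => /hasPn w_lt.
  have : size w <= k.
    rewrite -(size_iota 0 k) uniq_leq_size // => y /w_lt.
    by rewrite mem_iota -ltnNge.
  by rewrite size_w ltnn.
rewrite big_ord_recr /= (perm_big _ (perm_to_rem x_in)) big_cons addnC.
by rewrite leq_add ?IHk ?rem_uniq // size_rem // size_w.
Qed.

Lemma ltn_nth_col_len (s : seq nat) i j : sorted geq s ->
  (j < nth 0 s i) = (i < col_len s j).
Proof.
rewrite /col_len; elim: s i => [|a s IHs] i /=; first by rewrite nth_nil; case: i.
move=> a_path; have s_sorted := path_sorted a_path.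
have s_le_a : all (fun x => x <= a) s.
  exact: order_path_min (rev_trans leq_trans) a_path.
have [j_lt_a | a_le_j] := ltnP j a; first by case: i => [|i] //=; rewrite IHs.
have -> : count (fun p => j < p) s = 0.
  apply/eqP; rewrite -leqn0 leqNgt -has_count; apply/hasPn => x /(allP s_le_a) x_le.
  by rewrite -leqNgt (leq_trans x_le).
case: i => [|i] /=; first by rewrite ltnNge a_le_j.
apply/negbTE; rewrite -leqNgt.
have [i_lt | i_ge] := ltnP i (size s); last by rewrite nth_default.
exact: leq_trans (allP s_le_a _ (mem_nth 0 i_lt)) a_le_j.
Qed.

Lemma col_len_size (la : seq nat) j : col_len la j <= size la.
Proof. exact: count_size. Qed.

Lemma count_mem1_add_count_gt1 (s : seq nat) : all (fun p => 0 < p) s ->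
  count_mem 1 s + count (fun p => 1 < p) s = size s.
Proof. elim: s => //= a s IHs /andP[a_gt0 /IHs]; case: (ltngtP 1 a) => /=; lia. Qed.

Lemma sumn_ge_size_count (s : seq nat) : all (fun p => 0 < p) s ->
  size s + count (fun p => 1 < p) s <= sumn s.
Proof. elim: s => //= a s IHs /andP[a_gt0 /IHs]; case: (ltnP 1 a) => /=; lia. Qed.

Lemma sumn_ge_nth (s : seq nat) i : all (fun p => 0 < p) s -> i < size s ->
  nth 0 s i + size s <= (sumn s).+1.
Proof.
elim: s i => //= a s IHs [|i] /andP[a_gt0 s_pos] /=.
  by have := sumn_ge_size_count s_pos; lia.
by move=> /(IHs i s_pos); lia.
Qed.

Lemma sumn_ge_nth_count (s : seq nat) i : all (fun p => 0 < p) s ->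
  1 < nth 0 s i -> nth 0 s i + size s + count (fun p => 1 < p) s <= (sumn s).+2.
Proof.
elim: s i => [|a s IHs] [|i] //= /andP[a_gt0 s_pos] nth_gt1.
  by have := sumn_ge_size_count s_pos; rewrite nth_gt1 /=; lia.
by have := IHs i s_pos nth_gt1; case: (ltnP 1 a) => /=; lia.
Qed.

(* The beta-numbers [beta la i] (the first-column hook lengths) and the numbers
   [gap la j] partition nat, and row [i] of the diagram consists of the hooks
   [beta la i - gap la j] for the gaps below [beta la i]. *)
Definition beta (la : seq nat) i := nth 0 la i + (size la - i.+1).
Definition gap (la : seq nat) j := j + (size la - col_len la j).

(* Position of the bead [beta la i] on the [m]-abacus of [la] after all beads
   have been slid to the top of their runners. *)
Definition bead_up (la : seq nat) m i :=
  m * count (fun b => (b < beta la i) && (b %% m == beta la i %% m)) (fch la)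
  + beta la i %% m.

Section BetaNumbers.

Variable la : seq nat.
Hypothesis la_sorted : sorted geq la.
Hypothesis la_pos : all (fun p => 0 < p) la.

Lemma hook_beta_gap i j : j < nth 0 la i -> hook la i j = beta la i - gap la j.
Proof.
move=> j_lt; have := j_lt; rewrite ltn_nth_col_len // => i_lt.
by have := col_len_size la j; rewrite /hook /beta /gap; lia.
Qed.

Lemma hook_first_column i : i < size la -> hook la i 0 = beta la i.
Proof.
move=> i_lt; have nth_gt0 : 0 < nth 0 la i by apply: (allP la_pos); rewrite mem_nth.
have col_len0 : col_len la 0 = size la by apply/eqP; rewrite -all_count.
by rewrite hook_beta_gap // /gap col_len0 subnn addn0 subn0.
Qed.

Lemma fchE : fch la = map (beta la) (iota 0 (size la)).
Proof.
by apply/eq_in_map => i; rewrite mem_iota add0n => /andP[_ /hook_first_column].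
Qed.

Lemma beta_ltn i k : i < k -> k < size la -> beta la k < beta la i.
Proof.
move=> i_lt_k k_lt; have i_lt := ltn_trans i_lt_k k_lt.
have nth_le := sorted_leq_nth (rev_trans leq_trans) leqnn 0 la_sorted i k.
by have := nth_le i_lt k_lt (ltnW i_lt_k); rewrite /beta; lia.
Qed.

Lemma uniq_fch : uniq (fch la).
Proof.
rewrite fchE map_inj_in_uniq ?iota_uniq // => i k.
rewrite !mem_iota !add0n /= => i_lt k_lt eq_beta.
case: (ltngtP i k) => // [i_lt_k | k_lt_i].
- by have := beta_ltn i_lt_k k_lt; rewrite eq_beta ltnn.
- by have := beta_ltn k_lt_i i_lt; rewrite eq_beta ltnn.
Qed.

Lemma gap_notin_fch j : gap la j \notin fch la.
Proof.
rewrite fchE; apply/mapP => -[k]; rewrite mem_iota add0n /= => k_lt.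
have := col_len_size la j; rewrite /gap /beta.
case: (ltnP k (col_len la j)) => [k_lt_col | col_le_k].
  by have := k_lt_col; rewrite -ltn_nth_col_len //; lia.
by have := col_le_k; rewrite leqNgt -ltn_nth_col_len // -leqNgt; lia.
Qed.

Lemma gap_ltn j j' : j < j' -> gap la j < gap la j'.
Proof.
move=> j_lt; have : col_len la j' <= col_len la j.
  by apply: sub_count => p /=; apply/leq_ltn_trans/ltnW.
by have := col_len_size la j; rewrite /gap; lia.
Qed.

Lemma count_fch_ltn_beta i : i < size la ->
  count (fun b => b < beta la i) (fch la) = size la - i.+1.
Proof.
move=> i_lt; rewrite fchE count_map.
rewrite (eq_in_count (a2 := fun k => i < k)) => [|k]; last first.
  rewrite mem_iota add0n /= => k_lt.
  case: (ltngtP i k) => [/beta_ltn -> // | /beta_ltn/(_ i_lt) | ->]; last exact: ltnn.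
  by move=> /ltnW; rewrite leqNgt => /negbTE.
rewrite -{1}(subnKC i_lt) iotaD count_cat add0n.
rewrite (eq_in_count (a2 := pred0)) => [|k]; last first.
  by rewrite mem_iota add0n ltnS => /andP[_ k_le]; apply/negbTE; rewrite -leqNgt.
rewrite count_pred0 (eq_in_count (a2 := predT)) ?count_predT ?size_iota // => k.
by rewrite mem_iota => /andP[].
Qed.

Lemma gaps_below_beta i : i < size la ->
  perm_eq (map (gap la) (iota 0 (nth 0 la i)))
          [seq t <- iota 0 (beta la i) | t \notin fch la].
Proof.
move=> i_lt.
have gaps_uniq : uniq (map (gap la) (iota 0 (nth 0 la i))).
  rewrite map_inj_uniq ?iota_uniq // => j j' eq_gap.
  by case: (ltngtP j j') => // /gap_ltn; rewrite eq_gap ltnn.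
have gaps_sub : {subset map (gap la) (iota 0 (nth 0 la i))
                 <= [seq t <- iota 0 (beta la i) | t \notin fch la]}.
  move=> t /mapP[j]; rewrite mem_iota add0n /= => j_lt ->.
  rewrite mem_filter gap_notin_fch mem_iota add0n /=.
  by have := hook_beta_gap j_lt; rewrite /hook; lia.
have size_le : size [seq t <- iota 0 (beta la i) | t \notin fch la]
               <= size (map (gap la) (iota 0 (nth 0 la i))).
  have := count_predIC (fun t => t \in fch la) predT (iota 0 (beta la i)).
  rewrite count_iota_mem ?uniq_fch // count_predT size_iota.
  under eq_count do rewrite andbT.
  under [X in _ + X = _]eq_count do rewrite andbT.
  rewrite count_fch_ltn_beta // size_map size_iota size_filter /beta; lia.
have [_ eq_gaps] := uniq_min_size gaps_uniq gaps_sub size_le.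
by apply: uniq_perm; rewrite ?filter_uniq ?iota_uniq.
Qed.

Lemma count_dvdn_hook_row m i : 0 < m -> i < size la ->
  m * count (fun j => m %| hook la i j) (iota 0 (nth 0 la i)) + bead_up la m i
  = beta la i.
Proof.
move=> m_gt0 i_lt; set x := beta la i.
have count_hooks : count (fun j => m %| hook la i j) (iota 0 (nth 0 la i)) =
    count (fun t => (t \notin fch la) && (t %% m == x %% m)) (iota 0 x).
  transitivity (count (fun t => m %| x - t) (map (gap la) (iota 0 (nth 0 la i)))).
    rewrite count_map; apply: eq_in_count => j; rewrite mem_iota add0n /=.
    by move=> /hook_beta_gap ->.
  rewrite (permP (gaps_below_beta i_lt)) count_filter.
  apply: eq_in_count => t; rewrite mem_iota add0n /= => t_lt.
  by rewrite andbC eq_sym eqn_mod_dvd // ltnW.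
have := count_predIC (fun t => t \in fch la) (fun t => t %% m == x %% m) (iota 0 x).
rewrite count_iota_mem ?uniq_fch // count_iota_modn // -count_hooks /bead_up -/x.
move=> eq_div; rewrite [RHS](divn_eq x m) -eq_div mulnDl !(mulnC m).
by rewrite addnCA addnA.
Qed.

Lemma count_beads_above m i k : i < k -> k < size la ->
  beta la i %% m = beta la k %% m ->
  count (fun b => (b < beta la k) && (b %% m == beta la k %% m)) (fch la)
  < count (fun b => (b < beta la i) && (b %% m == beta la i %% m)) (fch la).
Proof.
move=> i_lt_k k_lt eq_mod; apply: (ltn_count (y := beta la k)).
- move=> b /andP[b_lt]; rewrite eq_mod => ->; rewrite andbT.
  exact: ltn_trans b_lt (beta_ltn i_lt_k k_lt).
- by rewrite fchE map_f // mem_iota.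
- by rewrite beta_ltn // eq_mod eqxx.
- by rewrite ltnn.
Qed.

Lemma uniq_bead_up m : 0 < m -> uniq (map (bead_up la m) (iota 0 (size la))).
Proof.
move=> m_gt0; rewrite map_inj_in_uniq ?iota_uniq // => i k.
rewrite !mem_iota !add0n /= => i_lt k_lt eq_bead.
have eq_mod : beta la i %% m = beta la k %% m.
  have := congr1 (modn^~ m) eq_bead.
  by rewrite /bead_up /= !(mulnC m) !modnMDl !modn_mod.
have /eqP := eq_bead; rewrite /bead_up eq_mod eqn_add2r eqn_pmul2l // => /eqP eq_counts.
case: (ltngtP i k) => // [i_lt_k | k_lt_i].
- by have := count_beads_above i_lt_k k_lt eq_mod; rewrite eq_mod eq_counts ltnn.
- have := count_beads_above k_lt_i i_lt (esym eq_mod).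
  by rewrite eq_mod eq_counts ltnn.
Qed.

Lemma count_dvdn_hooks m : 0 < m ->
  m * \sum_(i < size la) count (fun j => m %| hook la i j) (iota 0 (nth 0 la i))
  <= sumn la.
Proof.
move=> m_gt0.
have rows : \sum_(i < size la)
    (m * count (fun j => m %| hook la i j) (iota 0 (nth 0 la i)) + bead_up la m i)
    = \sum_(i < size la) beta la i.
  by apply: eq_bigr => i _; rewrite count_dvdn_hook_row.
have sum_beta : \sum_(i < size la) beta la i
                = sumn la + \sum_(i < size la) (i : nat).
  rewrite big_split /=; congr (_ + _); first by rewrite sumnE (big_nth 0) big_mkord.
  by rewrite [RHS](reindex_inj rev_ord_inj).
have := sum_ord_leq_sum_uniq (uniq_bead_up m_gt0).
rewrite size_map size_iota big_map big_iota0 /=.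
by rewrite big_split -big_distrr sum_beta /= in rows; lia.
Qed.

End BetaNumbers.

Definition hook_prod (la : seq nat) :=
  \prod_(i < size la) \prod_(j < nth 0 la i) hook la i j.

Lemma hook_gt0 la i j : 0 < hook la i j.
Proof. by rewrite /hook addn1. Qed.

Lemma hook_prod_gt0 la : 0 < hook_prod la.
Proof. by apply: prodn_gt0 => i; apply: prodn_gt0 => j; apply: hook_gt0. Qed.

Lemma hook_leq_sumn la i j : all (fun p => 0 < p) la -> i < size la ->
  hook la i j <= sumn la.
Proof.
move=> la_pos i_lt; have := sumn_ge_nth la_pos i_lt.
have : 0 < nth 0 la i by apply: (allP la_pos); rewrite mem_nth.
by have := col_len_size la j; rewrite /hook; lia.
Qed.

(* Compare Legendre's formula for [(sumn la)`!] with [count_dvdn_hooks] at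
   every prime power. *)
Lemma hook_prod_dvdn_fact la : sorted geq la -> all (fun p => 0 < p) la ->
  hook_prod la %| (sumn la)`!.
Proof.
move=> la_sorted la_pos; apply: dvdn_logn; [exact: hook_prod_gt0 | exact: fact_gt0 |].
move=> p p_pr; set n := sumn la.
have logn_hook i j : i < size la ->
    logn p (hook la i j) = \sum_(1 <= k < n.+1) (p ^ k %| hook la i j).
  move=> i_lt; apply: (logn_count_dvd_widen p_pr (hook_gt0 _ _ _)).
  exact: leq_trans (hook_leq_sumn j la_pos i_lt) (leqnSn n).
rewrite logn_fact // /hook_prod logn_prod => [|i]; last first.
  by apply: prodn_gt0 => j; apply: hook_gt0.
rewrite (eq_bigr (fun i : 'I_(size la) =>
    \sum_(1 <= k < n.+1) \sum_(j < nth 0 la i) (p ^ k %| hook la i j)))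
  => [|i _]; last first.
  rewrite logn_prod => [|j]; last exact: hook_gt0.
  by under eq_bigr => j _ do rewrite logn_hook //; rewrite exchange_big.
rewrite exchange_big /=; apply: leq_sum => k _.
have pk_gt0 : 0 < p ^ k by rewrite expn_gt0 prime_gt0.
rewrite leq_divRL // mulnC.
under eq_bigr => i _ do rewrite (sum_ord_count (fun j => p ^ k %| hook la i j)).
exact: count_dvdn_hooks.
Qed.

Lemma hook_ltn_sub_l1 la i j : sorted geq la -> all (fun p => 0 < p) la ->
  0 < j -> j < nth 0 la i -> hook la i j < sumn la - l1 la.
Proof.
move=> la_sorted la_pos j_gt0 j_lt.
have i_lt_col : i < col_len la j by rewrite -ltn_nth_col_len.
have col_le : col_len la j <= col_len la 1.
  by apply: sub_count => p; apply: leq_ltn_trans.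
have := sumn_ge_nth_count la_pos (leq_ltn_trans j_gt0 j_lt).
have := count_mem1_add_count_gt1 la_pos.
by rewrite /hook /l1 /col_len in i_lt_col col_le *; lia.
Qed.

(* Only first-column hooks can reach [sumn la - l1 la]. *)
Lemma logn_hook_prod la q : sorted geq la -> all (fun p => 0 < p) la ->
  prime q -> sumn la - l1 la <= q ->
  logn q (hook_prod la) = \sum_(b <- fch la) logn q b.
Proof.
move=> la_sorted la_pos q_pr q_ge.
rewrite /hook_prod logn_prod => [|i]; last first.
  by apply: prodn_gt0 => j; apply: hook_gt0.
rewrite /fch big_map big_iota0; apply: eq_bigr => i _.
have nth_gt0 : 0 < nth 0 la i by apply: (allP la_pos); rewrite mem_nth.
rewrite logn_prod => [|j]; last exact: hook_gt0.
rewrite -(prednK nth_gt0) big_ord_recl /= big1 ?addn0 // => j _.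
have hook_lt : hook la i j.+1 < q.
  by apply: leq_trans q_ge; rewrite hook_ltn_sub_l1 // -(ltn_predRL) ltn_ord.
apply/eqP; rewrite -leqn0 leqNgt logn_gt0 mem_primes q_pr hook_gt0 /=.
by apply/negP => /(dvdn_leq (hook_gt0 _ _ _)); rewrite leqNgt hook_lt.
Qed.

Lemma fch_sub_iota la : sorted geq la -> all (fun p => 0 < p) la ->
  {subset fch la <= iota 1 (sumn la)}.
Proof.
move=> la_sorted la_pos b; rewrite fchE // => /mapP[i].
rewrite mem_iota add0n /= => i_lt ->.
have nth_gt0 : 0 < nth 0 la i by apply: (allP la_pos); rewrite mem_nth.
by have := sumn_ge_nth la_pos i_lt; rewrite mem_iota /beta; lia.
Qed.

Theorem proposition7p3 (n : nat) (la : seq nat) (q : nat) :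
  is_partition n la ->
  prime q ->
  n - l1 la <= q <= n ->
  ~~ (q %| flam la) ->
  forall k : nat, 1 <= k <= n %/ q -> k * q \in fch la.
Proof.
move=> [la_sorted la_pos <-] q_pr /andP[q_ge _] q_ndvd k /andP[k_gt0 k_le].
move: q_ndvd; apply: contraNT => kq_notin.
have kq_in : k * q \in iota 1 (sumn la).
  by rewrite mem_iota add1n ltnS muln_gt0 k_gt0 prime_gt0 // -leq_divRL ?prime_gt0.
have := sum_logn_ltn_logn_fact q_pr (uniq_fch la_sorted la_pos)
  (fch_sub_iota la_sorted la_pos) kq_in kq_notin (dvdn_mull k (dvdnn q)).
rewrite -logn_hook_prod // => lt_logn.
have : 0 < logn q (flam la).
  by rewrite /flam -/(hook_prod la) logn_div ?hook_prod_dvdn_fact // subn_gt0.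
by rewrite logn_gt0 mem_primes => /and3P[].
Qed.
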